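(* Let $1\le k\le m$ and let $\phi_{m,k}$ be the automorphism of the free group $F(A_1,\dots,A_m,B_1,\dots,B_k)$ described below. Then the largest Jordan block in the Jordan normal form of each of the induced automorphisms $\phi_{m,k}^{ab}$ and $(\phi_{m,k}^{-1})^{ab}$ of $\mathbb Z^{m+k}$ has size $k+1$.
   Context: $\phi_{m,k}(A_i)=A_1\cdots A_{i-1}A_iA_{i-1}^{-1}\cdots A_1^{-1}$ for $1\le i\le m$, and $\phi_{m,k}(B_j)=A_1\cdots A_m(B_1\cdots B_j)A_{j-1}^{-1}\cdots A_1^{-1}$ for $1\le j\le k$. $\psi^{ab}$ denotes the automorphism induced on the abelianization, viewed as a matrix in $GL(m+k,\mathbb C)$. *)

From HB Require Import structures.
From mathcomp Require Import all_boot all_order all_algebra all_field.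
Set Implicit Arguments. Unset Strict Implicit. Unset Printing Implicit Defensive.
Import Order.TTheory GRing.Theory Num.Theory.
Local Open Scope ring_scope.

(* Words in the free group F(A_1..A_m, B_1..B_k): generators are encoded by
   natural numbers, A_i (1-indexed) |-> i-1 and B_j (1-indexed) |-> m + j - 1.
   A letter is (generator, inverted?). *)
Definition letter := (nat * bool)%type.
Definition word := seq letter.

Definition phi_word (m k : nat) (g : 'I_(m + k)) : word :=
  if (g < m)%N then
    let i := val g in
    [seq (a, false) | a <- iota 0 i] ++ [:: (i, false)]
      ++ [seq (a, true) | a <- rev (iota 0 i)]
  else
    let j := (val g - m)%N in
    [seq (a, false) | a <- iota 0 m] ++ [seq ((m + b)%N, false) | b <- iota 0 j.+1]
      ++ [seq (a, true) | a <- rev (iota 0 j)].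

(* image of a word in the abelianization Z^(m+k): exponent sums *)
Definition ab_word (n : nat) (w : word) : 'cV[int]_n :=
  \col_(g < n) \sum_(x <- w | x.1 == val g) (if x.2 then -1 else 1).

(* matrix of phi_{m,k}^ab in the basis A_1..A_m,B_1..B_k (column c = image of
   the c-th generator) *)
Definition phi_ab (m k : nat) : 'M[int]_(m + k) :=
  \matrix_(r, c) (ab_word (m + k) (phi_word c) r 0).

Definition phi_ab_C (m k : nat) : 'M[algC]_(m + k) := map_mx intr (phi_ab m k).

Definition jordan_block (n : nat) (a : algC) : 'M[algC]_n :=
  \matrix_(i, j) (if i == j then a else if (val j == (val i).+1)%N then 1 else 0).

Definition jordan_form_of (n : nat) (M : 'M[algC]_n) (r : nat)
  (s : 'I_r -> nat) (l : 'I_r -> algC) : Prop :=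
  exists (e : (\sum_(i < r) s i)%N = n) (P : 'M[algC]_n),
    P \in unitmx /\
    M = invmx P *m castmx (e, e) (\mxdiag_(i < r) jordan_block (s i) (l i)) *m P.

Definition largest_jordan_block (n : nat) (M : 'M[algC]_n) (b : nat) : Prop :=
  (exists r s l, @jordan_form_of n M r s l /\ (\max_(i < r) s i)%N = b) /\
  (forall r s l, @jordan_form_of n M r s l -> (\max_(i < r) s i)%N = b).

(* Let N := phi^ab - 1. Give A_i height 0 and B_j height j. The image of a
   generator under N involves only generators of smaller height, so N^(k+1) = 0;
   following B_k -> B_(k-1) -> ... -> B_1 -> A_1, where each step reaches exactly
   one generator of the next height, shows N^k <> 0; and N kills the A_i, so
   rank N <= k.
   A unipotent matrix A with (A - 1)^(k+1) = 0 <> (A - 1)^k and rank (A - 1) <= k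
   is similar to J_(k+1)(1) + I: for w with w N^k <> 0 the chain w, wN, ..., wN^k
   is free and meets ker N in the line of wN^k, and as dim ker N >= n - k, a
   complement of that line in ker N provides the blocks of size 1. Conversely, in
   any Jordan form of A every block has eigenvalue 1 and the largest one has the
   size of the nilpotency index of A - 1. Finally A^-1 - 1 = -(A - 1) A^-1 with
   commuting factors, so A^-1 has the same invariants. *)

From mathcomp Require Import all_boot all_order all_algebra all_field zify.
Set Implicit Arguments. Unset Strict Implicit. Unset Printing Implicit Defensive.
Import Order.TTheory GRing.Theory Num.Theory.
Local Open Scope ring_scope.

Section BlockDiagonal.
Context {R : pzRingType} {p : nat} {p_ : 'I_p -> nat}.

Lemma mul_mxdiag (B C : forall i, 'M[R]_(p_ i)) :
  \mxdiag_i B i *m \mxdiag_i C i = \mxdiag_i (B i *m C i).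
Proof.
rewrite {2}/mxdiag mul_mxdiag_mxblock /mxdiag; apply: eq_mxblock => i j.
by case: eqP => [<-|_]; rewrite ?conform_mx_id ?mulmx0.
Qed.

Lemma mxdiagX (B : forall i, 'M[R]_(p_ i)) q :
  (\mxdiag_i B i) ^+ q = \mxdiag_i (B i ^+ q).
Proof.
elim: q => [|q IHq].
  by rewrite expr0 -idmxE -(mxdiagZ (p_ := p_)); apply: eq_mxdiag => i; rewrite idmxE.
by rewrite exprS IHq -mulmxE mul_mxdiag; apply: eq_mxdiag => i; rewrite exprS.
Qed.

Lemma mxdiag_eq0 (B : forall i, 'M[R]_(p_ i)) :
  (\mxdiag_i B i == 0) = [forall i, B i == 0].
Proof.
apply/eqP/forallP => [B0 i | B0]; apply/eqP.
  by rewrite -(submxblock_diag B i) B0 submxblock0.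
by rewrite (eq_mxdiag (fun i => eqP (B0 i))) mxdiag0.
Qed.

End BlockDiagonal.

Lemma sum_muln_eqn {V : nmodType} s (F : nat -> V) c :
  \sum_(u < s) F u *+ (u == c :> nat) = if (c < s)%N then F c else 0.
Proof.
rewrite -(@big_ord1_eq V 0 +%R) [RHS]big_mkcond; apply: eq_bigr => u _.
by rewrite mulrb.
Qed.

Section ShiftMatrix.
Context {R : nzSemiRingType}.

Definition shift_mx s : 'M[R]_s := \matrix_(i, j) (j == i.+1 :> nat)%:R.

Lemma shift_mxX s q :
  shift_mx s ^+ q = \matrix_(i, j) (val j == i + q)%N%:R.
Proof.
elim: q => [|q IHq]; apply/matrixP => i j.
  by rewrite expr0 -idmxE !mxE addn0 eq_sym.
rewrite exprS -mulmxE IHq !mxE.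
under eq_bigr do rewrite !mxE mulr_natl.
rewrite (sum_muln_eqn _ (fun u => (val j == u + q)%N%:R)) addSnnS; case: ltnP => // si.
by case: eqP => // ji; have := ltn_ord j; rewrite ji; lia.
Qed.

Lemma shift_mxX_eq0 s q : (shift_mx s ^+ q == 0) = (s <= q)%N.
Proof.
rewrite shift_mxX; case: leqP => [sq|qs].
  apply/eqP/matrixP => i j; rewrite !mxE; case: eqP => // ji.
  by have := ltn_ord j; rewrite ji; lia.
apply/eqP => /matrixP /(_ (Ordinal (leq_ltn_trans (leq0n q) qs)) (Ordinal qs)).
by rewrite !mxE /= add0n eqxx => /eqP; rewrite oner_eq0.
Qed.

End ShiftMatrix.

Lemma jordan_block_sub1 s : jordan_block s 1 - 1%:M = shift_mx s.
Proof.
apply/matrixP => i j; rewrite !mxE; case: (eqVneq i j) => [->|_].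
  by rewrite ltn_eqF ?subrr.
by rewrite subr0; case: ifP.
Qed.

Lemma det_mxX {R : comPzRingType} n (M : 'M[R]_n) q : \det (M ^+ q) = \det M ^+ q.
Proof.
elim: q => [|q IHq]; first by rewrite !expr0 -idmxE det1.
by rewrite !exprS -mulmxE det_mulmx IHq.
Qed.

Lemma jordan_block_sub1X_eq0 s a q :
  ((jordan_block s a - 1%:M) ^+ q == 0) = ((a == 1) || (s == 0%N)) && (s <= q)%N.
Proof.
case: (eqVneq a 1) => [->|a1]; first by rewrite jordan_block_sub1 shift_mxX_eq0.
case: s => [|s] /=; first by apply/eqP/matrixP => -[].
apply/negP => /eqP /(congr1 determinant); rewrite det0 det_mxX -det_tr det_trig.
  rewrite (eq_bigr (fun=> a - 1)) => [|i _]; last by rewrite !mxE eqxx.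
  rewrite prodr_const card_ord -exprM => /eqP.
  by rewrite expf_eq0 subr_eq0 (negPf a1) andbF.
apply/is_trig_mxP => i j ij; rewrite !mxE -val_eqE (gtn_eqF ij).
rewrite (_ : (val i == (val j).+1) = false) ?subr0 //.
by apply/negbTE; rewrite neq_ltn ltnS ltnW.
Qed.

Section Conjugation.
Context {R : comUnitRingType} {n : nat} (P : 'M[R]_n).
Hypothesis P_unit : P \in unitmx.

Lemma invmx_conjX (X : 'M[R]_n) q : (invmx P *m X *m P) ^+ q = invmx P *m X ^+ q *m P.
Proof.
elim: q => [|q IHq]; first by rewrite !expr0 -idmxE mulmx1 mulVmx.
by rewrite !exprS -!mulmxE IHq !mulmxA mulmxK.
Qed.

Lemma invmx_conj_eq0 (X : 'M[R]_n) : (invmx P *m X *m P == 0) = (X == 0).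
Proof.
apply/eqP/eqP => [|->]; last by rewrite mulmx0 mul0mx.
move/(congr1 (fun Y => P *m Y *m invmx P)).
by rewrite !mulmxA mulmxK // mulmxV // mul1mx mulmx0 mul0mx.
Qed.

End Conjugation.

Lemma jordan_form_sub1X_eq0 n (A : 'M[algC]_n) r (s : 'I_r -> nat) l q :
  jordan_form_of A s l ->
  ((A - 1%:M) ^+ q == 0) = [forall i, (jordan_block (s i) (l i) - 1%:M) ^+ q == 0].
Proof.
case=> e [P [P_unit defA]]; subst n; rewrite castmx_id in defA.
have -> : A - 1%:M = invmx P *m \mxdiag_i (jordan_block (s i) (l i) - 1%:M) *m P.
  by rewrite mxdiagB mxdiagZ mulmxBr mulmxBl mulmx1 mulVmx // -defA.
by rewrite invmx_conjX // invmx_conj_eq0 // mxdiagX mxdiag_eq0.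
Qed.

Lemma jordan_form_max_block n (A : 'M[algC]_n) r (s : 'I_r -> nat) l k :
  jordan_form_of A s l -> (A - 1%:M) ^+ k.+1 = 0 -> (A - 1%:M) ^+ k != 0 ->
  (\max_(i < r) s i)%N = k.+1.
Proof.
move=> JA /eqP; rewrite !(jordan_form_sub1X_eq0 _ JA) negb_forall.
under eq_forallb do rewrite jordan_block_sub1X_eq0.
move=> /forallP Nk1 /existsP[i]; rewrite jordan_block_sub1X_eq0.
have /andP[-> _] := Nk1 i; rewrite /= -ltnNge => ki.
apply/anti_leq/andP; split; last exact: leq_trans ki (leq_bigmax i).
by apply/bigmax_leqP => j _; have /andP[] := Nk1 j.
Qed.

Section NilpotentChain.
Variables (F : fieldType) (n k : nat) (N : 'M[F]_n) (w : 'rV[F]_n).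
Hypotheses (Nk1 : N ^+ k.+1 = 0) (wNk : w *m N ^+ k != 0).

Definition chain_mx : 'M_(k.+1, n) := \matrix_(t < k.+1) (w *m N ^+ t).

Lemma nilpotent_expr_eq0 p : (k < p)%N -> N ^+ p = 0.
Proof. by move=> kp; rewrite -(subnKC kp) exprD Nk1 mul0r. Qed.

Lemma mulmx_chain_mxX (x : 'rV_k.+1) q :
  x *m chain_mx *m N ^+ q = \sum_(t < k.+1) x 0 t *: (w *m N ^+ (t + q)).
Proof.
rewrite (mulmx_sum_row x) mulmx_suml; apply: eq_bigr => t _.
by rewrite rowK -scalemxAl exprD -mulmxE mulmxA.
Qed.

(* By strong induction on t: multiplying by N ^+ (k - t - q) leaves only the
   term x 0 t *: (w *m N ^+ k). *)
Lemma chain_coef_eq0 (x : 'rV_k.+1) q : x *m chain_mx *m N ^+ q = 0 ->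
  forall t : 'I_k.+1, (t + q <= k)%N -> x 0 t = 0.
Proof.
move=> xN0; suff IH : forall j (t : 'I_k.+1), (t < j)%N -> (t + q <= k)%N -> x 0 t = 0.
  by move=> t; exact: IH _ _ (ltnSn t).
elim=> // j IHj t tj tq; case: (ltnP t j) => [tj'|jt]; first exact: IHj tj' tq.
have : x *m chain_mx *m N ^+ (q + (k - t - q)) = 0.
  by rewrite exprD -mulmxE mulmxA xN0 mul0mx.
rewrite mulmx_chain_mxX (bigD1 t) //= big1 => [|u ut]; last first.
  case: (ltngtP u t) => [ut'|tu|/val_inj tu]; last by rewrite tu eqxx in ut.
    by rewrite IHj ?scale0r //; lia.
  by rewrite nilpotent_expr_eq0 ?mulmx0 ?scaler0 //; have := ltn_ord t; lia.
rewrite addr0 (_ : (t + _ = k)%N); last lia.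
by move/eqP; rewrite scaler_eq0 (negPf wNk) orbF => /eqP.
Qed.

Lemma chain_mx_free : row_free chain_mx.
Proof.
apply: inj_row_free => x x0; apply/rowP => t; rewrite mxE.
by apply: (chain_coef_eq0 (q := 0)); rewrite ?expr0 ?mulmx1 ?addn0 // -ltnS.
Qed.

Lemma ker_cap_chain_mx : (kermx N :&: chain_mx <= w *m N ^+ k)%MS.
Proof.
apply/row_subP => i; set y := row i _.
have /submxP[x yx] : (y <= chain_mx)%MS by rewrite (submx_trans (row_sub i _)) ?capmxSr.
have yN : y *m N = 0 by apply/sub_kermxP; rewrite (submx_trans (row_sub i _)) ?capmxSl.
have x0 : forall t : 'I_k.+1, (t + 1 <= k)%N -> x 0 t = 0.
  by apply: (chain_coef_eq0 (q := 1)); rewrite expr1 -yx.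
rewrite yx mulmx_sum_row (bigD1 ord_max) //= big1 ?addr0 => [|t tk].
  by rewrite rowK scalemx_sub.
rewrite x0 ?scale0r // addn1 ltn_neqAle -ltnS ltn_ord andbT.
by apply: contra tk => /eqP tk; apply/eqP/val_inj.
Qed.

End NilpotentChain.

(* In [jordan_form_of], A = P^-1 D P: the rows of P are Jordan chains for the
   right action v |-> v *m A. *)
Lemma jordan_chain_mul n p (A : 'M[algC]_n) (f : nat -> 'rV_n) :
  (forall t, (t < p)%N -> f t *m (A - 1%:M) = if (t.+1 < p)%N then f t.+1 else 0) ->
  (\matrix_(t < p) f t) *m A = jordan_block p 1 *m \matrix_(t < p) f t.
Proof.
move=> fN; rewrite -[jordan_block p 1](subrK 1%:M) jordan_block_sub1.
rewrite -[A in LHS](subrK 1%:M) mulmxDl mulmxDr mulmx1 mul1mx; congr (_ + _).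
apply/row_matrixP => t; rewrite row_mul rowK fN // row_mul mulmx_sum_row.
under eq_bigr do rewrite !mxE scaler_nat rowK.
by rewrite (sum_muln_eqn _ (fun u => f u)).
Qed.

Definition block_size k r (i : 'I_r.+1) : nat := if val i == 0%N then k.+1 else 1%N.

Lemma sum_block_size k r : (\sum_(i < r.+1) block_size k i)%N = (k.+1 + r)%N.
Proof. by rewrite big_ord_recl /= (eq_bigr (fun=> 1%N)) // sum1_card card_ord. Qed.

Lemma max_block_size k r : (\max_(i < r.+1) block_size k i)%N = k.+1.
Proof.
apply/anti_leq/andP; split; last exact: (leq_bigmax (F := @block_size k r) ord0).
by apply/bigmax_leqP => i _; rewrite /block_size; case: ifP.
Qed.

Section JordanBasis.
Variables (k r : nat).
Local Notation n := (\sum_(i < r.+1) block_size k i)%N.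
Variables (A : 'M[algC]_n) (w : 'rV[algC]_n) (Z : 'M[algC]_(r, n)).
Let N := A - 1%:M.
Hypotheses (Nk1 : N ^+ k.+1 = 0) (wNk : w *m N ^+ k != 0).
Hypotheses (Zfree : row_free Z) (ZK : (Z <= kermx N)%MS).
Hypothesis ZCh : forall u : 'rV_n, (u <= Z)%MS -> (u <= chain_mx k N w)%MS -> u = 0.

Definition jordan_basis_row (i : 'I_r.+1) t : 'rV_n :=
  oapp (fun j => row j Z) (w *m N ^+ t) (unlift ord0 i).

Definition jordan_basis : 'M_n :=
  \mxcol_i \matrix_(t < block_size k i) jordan_basis_row i t.

Lemma jordan_basis_mul :
  jordan_basis *m A = \mxdiag_i jordan_block (block_size k i) 1 *m jordan_basis.
Proof.
rewrite mxcol_mul mul_mxdiag_mxcol; apply: eq_mxcol => i; apply: jordan_chain_mul => t.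
rewrite /block_size /jordan_basis_row; case: (unliftP ord0 i) => [j|] -> /= _.
  by apply/sub_kermxP; exact: submx_trans (row_sub j Z) ZK.
rewrite -mulmxA mulmxE -exprSr; case: ltnP => // kt.
by rewrite (nilpotent_expr_eq0 Nk1) ?mulmx0.
Qed.

Lemma jordan_basis_unit : jordan_basis \in unitmx.
Proof.
rewrite -row_free_unit; apply: inj_row_free => x.
rewrite -(submxrowK x) mul_mxrow_mxcol [\sum_(i < r.+1) _ *m _]big_ord_recl.
have -> : \matrix_(t < block_size k (@ord0 r)) jordan_basis_row ord0 t = chain_mx k N w.
  by apply/row_matrixP => t; rewrite !rowK /jordan_basis_row unlift_none.
pose y : 'rV_r := \row_j submxrow x (lift ord0 j) 0 0.
set S := \sum_(i < r) _; have -> : S = y *m Z.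
  rewrite (mulmx_sum_row y); apply: eq_bigr => j _.
  by rewrite mulmx_sum_row big_ord1 rowK /jordan_basis_row liftK /= !mxE.
move=> /eqP; rewrite addr_eq0 => /eqP x0Ch.
have x0Ch0 : submxrow x ord0 *m chain_mx k N w = 0.
  by apply: ZCh; [rewrite x0Ch eqmx_opp |]; exact: submxMl.
have x0 : submxrow x ord0 = 0.
  by apply/eqP; rewrite -(mulmx_free_eq0 _ (chain_mx_free Nk1 wNk)) x0Ch0.
have /rowP y0 : y = 0.
  by apply/eqP; rewrite -(mulmx_free_eq0 _ Zfree) -oppr_eq0 -x0Ch x0Ch0.
rewrite -[RHS](mxrow0 (q_ := @block_size k r)); apply: eq_mxrow => i.
case: (unliftP ord0 i) => [j|] ->; last exact: x0.
by apply/matrixP => a b; move: (y0 j); rewrite !ord1 !mxE.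
Qed.

Lemma jordan_form_of_jordan_basis : jordan_form_of A (@block_size k r) (fun=> 1).
Proof.
exists erefl, jordan_basis; rewrite castmx_id; split; first exact: jordan_basis_unit.
by rewrite -mulmxA -jordan_basis_mul mulKmx ?jordan_basis_unit.
Qed.

End JordanBasis.

Section UnipotentJordanForm.
Variables (n k r : nat) (A : 'M[algC]_n).
Let N := A - 1%:M.
Hypotheses (n_eq : (k.+1 + r)%N = n) (Nk1 : N ^+ k.+1 = 0).

Lemma ker_chain_complement (w : 'rV_n) : w *m N ^+ k != 0 -> (\rank N <= k)%N ->
  exists Z : 'M_(r, n), [/\ row_free Z, (Z <= kermx N)%MS &
    forall u : 'rV_n, (u <= Z)%MS -> (u <= chain_mx k N w)%MS -> u = 0].
Proof.
move=> wNk rankN; set Ch := chain_mx k N w; set K := kermx N.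
have rank_cap : \rank (K :&: Ch)%MS = 1%N.
  have rank_v : \rank (w *m N ^+ k) = 1%N by rewrite rank_rV wNk.
  have v_Ch : (w *m N ^+ k <= Ch)%MS.
    by rewrite -[w *m _](rowK (fun t : 'I_k.+1 => w *m N ^+ t) ord_max) row_sub.
  have v_K : (w *m N ^+ k <= K)%MS.
    by apply/sub_kermxP; rewrite -mulmxA mulmxE -exprSr Nk1 mulmx0.
  apply/anti_leq/andP; rewrite -rank_v mxrankS ?ker_cap_chain_mx // mxrankS // sub_capmx.
  by rewrite v_Ch v_K.
have rank_diff : \rank (K :\: Ch)%MS = r.
  have := mxrank_cap_compl K Ch; have := mxrank_disjoint_sum (capmx_diff K Ch).
  have := rank_leq_col (K :\: Ch + Ch)%MS; rewrite mxrank_ker (eqP (chain_mx_free Nk1 wNk)).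
  lia.
rewrite -rank_diff; exists (row_base (K :\: Ch)%MS); split; first exact: row_base_free.
  by rewrite eq_row_base (submx_trans (diffmxSl _ _)).
move=> u uZ uCh; apply/eqP; rewrite -submx0 -(capmx_diff K Ch) sub_capmx uCh andbT.
by rewrite -(eq_row_base (K :\: Ch)%MS).
Qed.

Lemma unipotent_largest_jordan_block :
  N ^+ k != 0 -> (\rank N <= k)%N -> largest_jordan_block A k.+1.
Proof.
move=> Nk rankN; split=> [|b s l JA]; last exact: jordan_form_max_block JA Nk1 Nk.
have [_ /submxP[w ->] wNk] := rowV0Pn Nk.
have [Z [Zfree ZK ZCh]] := ker_chain_complement wNk rankN.
exists r.+1, (@block_size k r), (fun=> 1); split; last exact: max_block_size.
have e : (\sum_(i < r.+1) block_size k i)%N = n by rewrite sum_block_size.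
clear n_eq; subst n; exact: jordan_form_of_jordan_basis Nk1 wNk Zfree ZK ZCh.
Qed.

End UnipotentJordanForm.

Section UnipotentInverse.
Variables (F : fieldType) (n : nat) (A : 'M[F]_n).

Lemma unitmx_unipotent q : (A - 1%:M) ^+ q = 0 -> A \in unitmx.
Proof.
(* A * \sum_(i < q) (1 - A) ^+ i = 1 - (1 - A) ^+ q *)
move=> Nq; have := subrX1 (- (A - 1%:M)) q.
rewrite exprNn Nq mulr0 sub0r idmxE opprB addrAC subrr add0r mulNr => /oppr_inj AS.
by have [] := @mulmx1_unit _ _ A (\sum_(i < q) (1 - A) ^+ i); rewrite ?mulmxE -?AS ?idmxE.
Qed.

Hypothesis A_unit : A \in unitmx.

Lemma invmx_sub1 : invmx A - 1%:M = - (A - 1%:M) *m invmx A.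
Proof. by rewrite mulNmx mulmxBl mulmxV // mul1mx opprB. Qed.

Lemma invmx_sub1X_eq0 q : ((invmx A - 1%:M) ^+ q == 0) = ((A - 1%:M) ^+ q == 0).
Proof.
have comm : GRing.comm (- (A - 1%:M)) (invmx A).
  by rewrite /GRing.comm -!mulmxE mulNmx mulmxN mulmxBl mulmxBr mulmxV ?mulVmx ?mul1mx ?mulmx1.
have unitX : row_free (invmx A ^+ q).
  by rewrite row_free_unit unitmxE det_mxX unitrX // -unitmxE unitmx_inv.
rewrite invmx_sub1 mulmxE exprMn_comm // -mulmxE (mulmx_free_eq0 _ unitX) exprNn.
by rewrite -signr_odd; case: odd; rewrite ?expr0 ?expr1 ?mul1r ?mulN1r ?oppr_eq0.
Qed.

Lemma mxrank_invmx_sub1 : \rank (invmx A - 1%:M) = \rank (A - 1%:M).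
Proof. by rewrite invmx_sub1 mxrankMfree ?row_free_unit ?unitmx_inv // mxrank_opp. Qed.

End UnipotentInverse.

Lemma sum_letters (f : nat -> nat) b (s : seq nat) r :
  \sum_(x <- [seq (f a, b) | a <- s] | x.1 == r) (if x.2 then -1 else 1 : int)
  = (if b then -1 else 1) *+ count (fun a => f a == r) s.
Proof. by rewrite big_map big_const_seq iter_addr addr0. Qed.

Lemma count_iota_eq (a0 len r : nat) :
  count (fun a => a == r) (iota a0 len) = (a0 <= r < a0 + len)%N.
Proof. by have := count_uniq_mem r (iota_uniq a0 len); rewrite mem_iota. Qed.

Lemma count_iota_addn (m len r : nat) :
  count (fun a => m + a == r)%N (iota 0 len) = (m <= r < m + len)%N.
Proof. by rewrite -(count_map (addn m) (pred1 r)) -iotaDl addn0 count_iota_eq. Qed.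

Lemma phi_abE m k (r c : 'I_(m + k)) : (k <= m)%N ->
  phi_ab m k r c = (if (c < m)%N then r == c :> nat
                    else if (r < m)%N then (c - m <= r)%N else (r <= c)%N)%:R.
Proof.
move=> km; have := ltn_ord r; have := ltn_ord c.
rewrite !mxE /phi_word; case: ifP => cm; rewrite !big_cat !sum_letters ?count_rev.
  by rewrite big_mkcond big_seq1 /= -mulrb mulNrn !count_iota_eq; lia.
rewrite !count_iota_eq count_iota_addn /= mulNrn; case: ifP; lia.
Qed.

Lemma phi_sub1E m k (r c : 'I_(m + k)) : (k <= m)%N ->
  (phi_ab_C m k - 1%:M) r c = ((m <= c) && (if (r < m)%N then c - m <= r else r < c))%N%:R.
Proof.
move=> km; have cmk := ltn_ord c.
rewrite mxE [phi_ab_C _ _ _ _]mxE phi_abE // rmorph_nat !mxE -val_eqE /= -natrB.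
  by congr (_%:R); case: ifP => [|cm]; [|case: ifP]; lia.
by case: ifP => [|cm]; [|case: ifP]; lia.
Qed.

Lemma graded_mxX_eq0 {R : pzSemiRingType} n (N : 'M[R]_n) (h : 'I_n -> nat) :
  (forall i j, N i j != 0 -> (h i < h j)%N) ->
  forall p i j, (h j < h i + p)%N -> (N ^+ p) i j = 0.
Proof.
move=> hN; elim=> [|p IHp] i j hij.
  by rewrite expr0 -idmxE mxE; case: eqP => // ij; rewrite ij addn0 ltnn in hij.
rewrite exprS -mulmxE mxE big1 // => u _.
case: (eqVneq (N i u) 0) => [->|Niu]; first by rewrite mul0r.
by rewrite IHp ?mulr0 //; have := hN i u Niu; lia.
Qed.

Definition gen_height m (i : nat) : nat := if (i < m)%N then 0 else (i - m).+1.

Lemma gen_height_addn m j : gen_height m (m + j) = j.+1.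
Proof. by rewrite /gen_height ltnNge leq_addr addKn. Qed.

Lemma gen_height_eqE m i v : (0 < v)%N -> (gen_height m i == v) = (i == m + v.-1)%N.
Proof. by rewrite /gen_height => v0; case: ltnP => im; apply/eqP/eqP; lia. Qed.

Section PhiUnipotent.
Variables (m k : nat).
Hypothesis km : (k <= m)%N.
Let N := phi_ab_C m k - 1%:M.
Local Notation h := (gen_height m).

Lemma gen_height_le (i : 'I_(m + k)) : (h i <= k)%N.
Proof. by rewrite /gen_height; have := ltn_ord i; case: ifP; lia. Qed.

Lemma phi_sub1_height_lt (i j : 'I_(m + k)) : N i j != 0 -> (h i < h j)%N.
Proof.
rewrite phi_sub1E // /gen_height pnatr_eq0.
by case: (ltnP i m) => ?; case: (ltnP j m) => ? /=; lia.
Qed.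

Lemma phi_sub1E_height (i u : 'I_(m + k)) : (0 < h u)%N -> ((h u).-1 <= h i)%N ->
  N i u = (h i == (h u).-1)%:R.
Proof.
rewrite phi_sub1E // /gen_height.
by case: (ltnP i m) => ?; case: (ltnP u m) => ? //= *; congr (_%:R); lia.
Qed.

Lemma phi_sub1X_nilpotent : N ^+ k.+1 = 0.
Proof.
apply/matrixP => i j; rewrite mxE (graded_mxX_eq0 phi_sub1_height_lt) //.
by have := gen_height_le j; lia.
Qed.

(* On a path of length t from height h c - t up to h c every step raises the
   height by exactly one, and each positive height is that of one generator. *)
Lemma phi_sub1X_entry t (i c : 'I_(m + k)) :
  (0 < h c)%N -> (t <= h c)%N -> (h c - t <= h i)%N -> (N ^+ t) i c = (h i == h c - t)%N%:R.
Proof.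
move=> hc0; elim: t i => [|t IHt] i tc ci.
  rewrite expr0 -idmxE mxE subn0 -val_eqE /= eq_sym gen_height_eqE // eq_sym.
  by move: hc0; rewrite /gen_height; case: ifP => // cm _; congr (_%:R); congr (_ == _); lia.
have b_lt : (m + (h c - t).-1 < m + k)%N by have := gen_height_le c; lia.
pose b := Ordinal b_lt; have hb : h b = (h c - t)%N by rewrite gen_height_addn; lia.
rewrite exprS -mulmxE mxE (bigD1 b) //= big1 => [|u ub]; last first.
  case: (eqVneq (N i u) 0) => [->|Niu]; first by rewrite mul0r.
  have := phi_sub1_height_lt Niu => iu.
  rewrite IHt; [|lia|lia]; rewrite gen_height_eqE; last lia.
  by have /negbTE -> : (u : nat) != m + (h c - t).-1 := ub; rewrite mulr0.
rewrite IHt -?hb ?eqxx ?mulr1 ?addr0; try lia.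
by rewrite phi_sub1E_height ?hb; [congr (_%:R); congr (_ == _) | lia | lia]; lia.
Qed.

Lemma phi_sub1X_neq0 : (0 < k)%N -> N ^+ k != 0.
Proof.
move=> k0; have i_lt : (0 < m + k)%N by lia.
have c_lt : (m + k.-1 < m + k)%N by lia.
apply/eqP => /matrixP /(_ (Ordinal i_lt) (Ordinal c_lt)).
rewrite mxE phi_sub1X_entry /= gen_height_addn ?prednK // /gen_height; try lia.
by rewrite (leq_trans k0 km) subnn => /eqP; rewrite oner_eq0.
Qed.

Lemma phi_sub1_rank : (\rank N <= k)%N.
Proof.
(* the columns of the A_i vanish *)
have -> : N = rsubmx N *m row_mx (0 : 'M_(k, m)) 1%:M.
  rewrite mul_mx_row mulmx0 mulmx1 -[LHS]hsubmxK; congr row_mx.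
  by apply/matrixP => i j; rewrite mxE phi_sub1E //= leqNgt ltn_ord mxE.
exact: leq_trans (mxrankM_maxr _ _) (rank_leq_row _).
Qed.

End PhiUnipotent.

Theorem claim8p13 (m k : nat) (hk : (1 <= k)%N) (hkm : (k <= m)%N) :
  largest_jordan_block (phi_ab_C m k) k.+1 /\
  largest_jordan_block (invmx (phi_ab_C m k)) k.+1.
Proof.
have n_eq : (k.+1 + (m - 1))%N = (m + k)%N by lia.
have Nk1 := phi_sub1X_nilpotent hkm; have Nk := phi_sub1X_neq0 hkm hk.
have rankN := phi_sub1_rank hkm; have A_unit := unitmx_unipotent Nk1.
split; first exact: unipotent_largest_jordan_block n_eq Nk1 Nk rankN.
apply: (unipotent_largest_jordan_block n_eq).
- by apply/eqP; rewrite invmx_sub1X_eq0 // Nk1.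
- by rewrite invmx_sub1X_eq0.
- by rewrite mxrank_invmx_sub1.
Qed.
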